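(* Let $A$ be a finite set and $v:2^A\to\mathbb{R}_{\ge0}$ a monotone subadditive function with $v(\emptyset)=0$. Let $S_1,\dots,S_N$ enumerate all subsets of $A$ ($N=2^{|A|}$). For each $S\subseteq A$ define $\tilde v(S)$ to be the optimal value of the linear program $$\min \sum_{j=1}^N \alpha_j\, v(S_j)\quad\text{s.t.}\quad \alpha_j\ge 0\ (1\le j\le N),\qquad \sum_{j:\, i\in S_j}\alpha_j\ge 1\ \ \forall i\in S.$$ Then $\tilde v(\cdot)$ is an XOS (fractionally subadditive) function.
   Context: A function $w:2^A\to\mathbb{R}_{\ge 0}$ is XOS (equivalently fractionally subadditive) if for every $S\subseteq A$ and every family of weights $0\le x(T)\le 1$ ($T\subseteq A$) with $\sum_{T:\, i\in T}x(T)\ge 1$ for all $i\in S$, we have $w(S)\le\sum_{T\subseteq A}x(T)\,w(T)$; equivalently, $w$ is the pointwise maximum of finitely many nonnegative additive functions. *)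

From mathcomp Require Import all_boot all_order all_algebra.
From mathcomp Require Import boolp classical_sets reals.
Set Implicit Arguments. Unset Strict Implicit. Unset Printing Implicit Defensive.
Import Order.TTheory GRing.Theory Num.Theory.
Local Open Scope ring_scope.
Local Open Scope classical_set_scope.

Section Defs.
Variables (R : realType) (A : finType).

Definition set_monotone (v : {set A} -> R) :=
  forall S T : {set A}, S \subset T -> v S <= v T.

Definition set_subadditive (v : {set A} -> R) :=
  forall S T : {set A}, v (S :|: T) <= v S + v T.

Definition lp_feasible (S : {set A}) (alpha : {set A} -> R) :=
  (forall T, 0 <= alpha T) /\
  (forall i, i \in S -> 1 <= \sum_(T : {set A} | i \in T) alpha T).

Definition vtilde (v : {set A} -> R) (S : {set A}) : R :=
  inf [set x | exists alpha, lp_feasible S alpha /\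
                             x = \sum_(T : {set A}) alpha T * v T].

Definition XOS (w : {set A} -> R) :=
  (forall S, 0 <= w S) /\
  forall (S : {set A}) (x : {set A} -> R),
    (forall T, 0 <= x T <= 1) ->
    (forall i, i \in S -> 1 <= \sum_(T : {set A} | i \in T) x T) ->
    w S <= \sum_(T : {set A}) x T * w T.

End Defs.

From mathcomp Require Import all_boot all_order all_algebra.
From mathcomp Require Import boolp classical_sets reals.
Import Order.TTheory GRing.Theory Num.Theory.
Local Open Scope ring_scope.

(* Mixing near-optimal covers of the sets T with the weights x T gives a cover
   of S (every i of S lies in T's of total weight at least 1, each covering i
   at least once) whose cost is the x-weighted sum of their costs. Hence
   vtilde S <= sum_T x T * vtilde T up to an arbitrarily small error. *)

Section CoveringLP.
Variables (R : realType) (A : finType).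

Definition lp_cost (v : {set A} -> R) (alpha : {set A} -> R) : R :=
  \sum_(T : {set A}) alpha T * v T.

Lemma lp_feasible_indicator (S : {set A}) :
  lp_feasible S (fun T => (T == S)%:R : R).
Proof.
split=> [T|i iS]; first exact: ler0n.
by rewrite (bigD1 S) //= eqxx ler_wpDr // sumr_ge0.
Qed.

Lemma lp_feasible_mix {S : {set A}} {x : {set A} -> R}
    {f : {set A} -> {set A} -> R} :
  (forall T, 0 <= x T) ->
  (forall i, i \in S -> 1 <= \sum_(T : {set A} | i \in T) x T) ->
  (forall T, lp_feasible T (f T)) ->
  lp_feasible S (fun U => \sum_(T : {set A}) x T * f T U).
Proof.
move=> x_ge0 x_cover f_feas; split=> [U|i iS].
  by apply: sumr_ge0 => T _; rewrite mulr_ge0 //; case: (f_feas T) => ->.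
apply: le_trans (x_cover i iS) _; rewrite exchange_big /=.
rewrite [leRHS](bigID (fun T : {set A} => i \in T)) /= ler_wpDr //.
  apply: sumr_ge0 => T _; rewrite -mulr_sumr mulr_ge0 // sumr_ge0 // => U _.
  by case: (f_feas T) => ->.
apply: ler_sum => T iT; rewrite -mulr_sumr ler_peMr //.
by case: (f_feas T) => _ ->.
Qed.

Lemma lp_cost_mix (v : {set A} -> R) (x : {set A} -> R)
    (f : {set A} -> {set A} -> R) :
  lp_cost v (fun U => \sum_(T : {set A}) x T * f T U) =
  \sum_(T : {set A}) x T * lp_cost v (f T).
Proof.
rewrite /lp_cost; under eq_bigr => U _ do rewrite mulr_suml.
rewrite exchange_big /=; apply: eq_bigr => T _; rewrite mulr_sumr.
by apply: eq_bigr => U _; rewrite mulrA.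
Qed.

Variable v : {set A} -> R.
Hypothesis v_ge0 : forall S, 0 <= v S.

Lemma lp_cost_ge0 {S : {set A}} {alpha : {set A} -> R} :
  lp_feasible S alpha -> 0 <= lp_cost v alpha.
Proof. by case=> alpha_ge0 _; apply: sumr_ge0 => T _; rewrite mulr_ge0. Qed.

Lemma has_inf_lp_values (S : {set A}) :
  has_inf [set y | exists alpha, lp_feasible S alpha /\ y = lp_cost v alpha].
Proof.
split.
  pose indicator_S T : R := (T == S)%:R.
  by exists (lp_cost v indicator_S), indicator_S; split=> //;
    exact: lp_feasible_indicator.
by exists 0 => _ [alpha [feas ->]]; exact: lp_cost_ge0 feas.
Qed.

Lemma vtilde_ge0 (S : {set A}) : 0 <= vtilde v S.
Proof.
have [nonempty _] := has_inf_lp_values S.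
apply: (lb_le_inf nonempty) => _ [alpha [feas ->]]; exact: lp_cost_ge0 feas.
Qed.

Lemma vtilde_le_lp_cost {S : {set A}} {alpha : {set A} -> R} :
  lp_feasible S alpha -> vtilde v S <= lp_cost v alpha.
Proof.
move=> feas; have [_ bounded] := has_inf_lp_values S.
by apply: (ge_inf bounded); exists alpha.
Qed.

Lemma vtilde_approx (S : {set A}) {e : R} : 0 < e ->
  exists alpha, lp_feasible S alpha /\ lp_cost v alpha < vtilde v S + e.
Proof.
move=> e_gt0; have [_ [alpha [feas ->]] close] :=
  inf_adherent e_gt0 (has_inf_lp_values S).
by exists alpha.
Qed.

Lemma vtilde_frac_subadditive (S : {set A}) (x : {set A} -> R) :
  (forall T, 0 <= x T) ->
  (forall i, i \in S -> 1 <= \sum_(T : {set A} | i \in T) x T) ->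
  vtilde v S <= \sum_(T : {set A}) x T * vtilde v T.
Proof.
move=> x_ge0 x_cover; set X := \sum_(T : {set A}) x T.
have X_ge0 : 0 <= X by exact: sumr_ge0.
apply/ler_addgt0Pr => e e_gt0.
have d_gt0 : 0 < e / (1 + X) by rewrite divr_gt0 // ltr_wpDr.
have [f f_approx] := choice (fun T => vtilde_approx T d_gt0).
have f_feas T : lp_feasible T (f T) by case: (f_approx T).
apply: le_trans (vtilde_le_lp_cost (lp_feasible_mix x_ge0 x_cover f_feas)) _.
rewrite lp_cost_mix.
apply: (@le_trans _ _ (\sum_(T : {set A}) x T * (vtilde v T + e / (1 + X)))).
  by apply: ler_sum => T _; rewrite ler_wpM2l // ltW //; case: (f_approx T).
under eq_bigr => T _ do rewrite mulrDr.
rewrite big_split /= lerD2l -mulr_suml -/X mulrCA ger_pMr //.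
by rewrite ler_pdivrMr ?mul1r ?lerDr ?ltr_wpDr.
Qed.

End CoveringLP.

Theorem lemma3p4 (R : realType) (A : finType) (v : {set A} -> R) :
  (forall S, 0 <= v S) ->
  set_monotone v ->
  set_subadditive v ->
  v finset.set0 = 0 ->
  XOS (vtilde v).
Proof.
move=> v_ge0 _ _ _; split=> [S|S x x01 x_cover]; first exact: vtilde_ge0.
apply: vtilde_frac_subadditive x_cover => // T.
by case/andP: (x01 T).
Qed.
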